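(* Let $n\ge 2$, let $G=P_n$ be a path all of whose edges have weight $p\in(0,1)$, and let $\alpha\in(0,1)$. Then $\operatorname{cptw}(G,\alpha)$ is the minimum value of $m$ for which \[\sum_{s=n-1}^{m}\binom{m}{s}p^s(1-p)^{m-s}\ \ge\ \alpha.\]
   Context: Let $G$ be a finite simple graph in which each edge $uv$ has a weight $w_{uv}\in(0,1)$. Weighted zero forcing: start with a set $B\subseteq V(G)$ of blue vertices, all other vertices white. In each round, simultaneously, for every blue vertex $u$ that has exactly one white neighbor $v$ (with respect to the coloring at the start of the round), $u$ attempts to force $v$, succeeding with probability $w_{uv}$, all attempts being independent; a white vertex becomes blue at the end of the round if at least one attempt on it succeeds. $B$ is a weighted zero forcing set of $G$ if this process can eventually color all of $V(G)$ blue (equivalently, $B$ is a zero forcing set of the underlying unweighted graph under the standard rule); $\operatorname{Z}(G)$ is the minimum size of such a set. $\operatorname{ptw}(G,B)$ is the random variable giving the round in which the last white vertex becomes blue ($0$ if $B=V(G)$). For $\alpha\in(0,1)$, $\operatorname{cptw}(G,B,\alpha)$ is the least $t\ge 0$ with $\Pr(\operatorname{ptw}(G,B)\le t)\ge\alpha$, and $\operatorname{cptw}(G,\alpha)$ is the minimum of $\operatorname{cptw}(G,B,\alpha)$ over weighted zero forcing sets $B$ with $|B|=\operatorname{Z}(G)$. *)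

From HB Require Import structures.
From mathcomp Require Import all_boot all_order all_algebra.
Set Implicit Arguments. Unset Strict Implicit. Unset Printing Implicit Defensive.
Import Order.TTheory GRing.Theory Num.Theory.
Local Open Scope ring_scope.

Section WZF.
Variables (R : realFieldType) (T : finType) (adj : rel T) (w : T -> T -> R).

Definition white_nbrs (S : {set T}) (u : T) : {set T} :=
  [set v | adj u v && (v \notin S)].

Definition forcers (S : {set T}) : {set T} :=
  [set u in S | #|white_nbrs S u| == 1%N].

(* blue set after a round in which exactly the forcers in A succeed *)
Definition after_round (S A : {set T}) : {set T} :=
  S :|: [set v | [exists u in A, v \in white_nbrs S u]].

(* probability that the coloring S becomes S' in one round: sum over the
   sets A of successful attempts (independent attempts, u succeeds with
   probability w u v where v is its unique white neighbour) *)
Definition step_prob (S S' : {set T}) : R :=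
  \sum_(A : {set T} | A \subset forcers S)
     (S' == after_round S A)%:R *
     ((\prod_(u in A) \prod_(v in white_nbrs S u) w u v) *
      (\prod_(u in forcers S :\: A) \prod_(v in white_nbrs S u) (1 - w u v))).

(* distribution of the blue set at the end of round t, starting from B *)
Fixpoint blue_dist (B : {set T}) (t : nat) (S' : {set T}) : R :=
  match t with
  | 0%N => (S' == B)%:R
  | t'.+1 => \sum_(S : {set T}) blue_dist B t' S * step_prob S S'
  end.

(* Pr(ptw(G,B) <= t) *)
Definition prob_ptw_le (B : {set T}) (t : nat) : R := blue_dist B t [set: T].

Definition zf_step (S : {set T}) : {set T} :=
  S :|: [set v | [exists u in S, white_nbrs S u == [set v]]].
Definition zf_closure (B : {set T}) : {set T} := iter #|T| zf_step B.
Definition zero_forcing_set (B : {set T}) : bool := zf_closure B == [set: T].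

Definition is_Z (k : nat) : Prop :=
  (exists B, zero_forcing_set B /\ #|B| = k) /\
  (forall B, zero_forcing_set B -> (k <= #|B|)%N).

Definition is_cptw_set (B : {set T}) (alpha : R) (t : nat) : Prop :=
  alpha <= prob_ptw_le B t /\ (forall t', (t' < t)%N -> prob_ptw_le B t' < alpha).

Definition is_cptw (alpha : R) (t : nat) : Prop :=
  (exists B, zero_forcing_set B /\ is_Z #|B| /\ is_cptw_set B alpha t) /\
  (forall B t', zero_forcing_set B -> is_Z #|B| -> is_cptw_set B alpha t' ->
     (t <= t')%N).

End WZF.

Definition path_adj (n : nat) : rel 'I_n :=
  fun i j => (i.+1 == j :> nat) || (j.+1 == i :> nat).

(* Order the vertices of P_{n+1} from one endpoint by a rank 0, ..., n.  If
   B is that endpoint, then after every round the blue set is a prefix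
   "ranks <= k", and in each round the front advances by one vertex with
   probability p (the last blue vertex has exactly one white neighbour) until
   the path is blue.  Hence the front after t rounds is at k < n with the
   binomial probability C(t,k) p^k (1-p)^(t-k), and the path is all blue with
   the binomial tail probability Pr(Bin(t,p) >= n). *)

From HB Require Import structures.
From mathcomp Require Import all_boot all_order all_algebra.
From mathcomp Require Import zify ring.
Import Order.TTheory GRing.Theory Num.Theory.
Set Implicit Arguments. Unset Strict Implicit. Unset Printing Implicit Defensive.
Local Open Scope ring_scope.

Section BinomialTail.
Variables (R : realFieldType) (p : R).

Definition binom_term (t s : nat) : R := 'C(t, s)%:R * p ^+ s * (1 - p) ^+ (t - s).
Definition binom_tail (m t : nat) : R := \sum_(m <= s < t.+1) binom_term t s.

Lemma binom_term_S0 t : binom_term t.+1 0 = (1 - p) * binom_term t 0.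
Proof. by rewrite /binom_term !bin0 !subn0 exprS; ring. Qed.

Lemma binom_term_SS t s :
  binom_term t.+1 s.+1 = (1 - p) * binom_term t s.+1 + p * binom_term t s.
Proof.
rewrite /binom_term binS natrD subSS.
have [lt_st | le_ts] := ltnP s t.
  have -> : (t - s = (t - s.+1).+1)%N by lia.
  by rewrite !exprS; ring.
by rewrite (bin_small (n := t) (m := s.+1)) // exprS; ring.
Qed.

Lemma binom_term_small t s : (t < s)%N -> binom_term t s = 0.
Proof. by move=> lt_ts; rewrite /binom_term bin_small // !mul0r. Qed.

Lemma binom_term_sum t N : (t < N)%N -> \sum_(0 <= s < N) binom_term t s = 1.
Proof.
move=> lt_tN; rewrite (big_cat_nat _ (n := t.+1)) //=.
have -> : \sum_(t.+1 <= s < N) binom_term t s = 0.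
  by rewrite big_nat_cond big1 // => s /andP [/andP [lt_ts _] _]; rewrite binom_term_small.
rewrite addr0.
have := exprDn (1 - p) p t; rewrite subrK expr1n big_mkord => ->.
by apply: eq_bigr => s _; rewrite /binom_term -mulr_natl; ring.
Qed.

Lemma binom_tail_head m t : binom_tail m t + \sum_(0 <= s < m) binom_term t s = 1.
Proof.
rewrite /binom_tail; have [le_mt | lt_tm] := leqP m t.+1.
  by rewrite addrC -big_cat_nat //= binom_term_sum.
by rewrite big_geq ?add0r ?binom_term_sum //; lia.
Qed.

Lemma binom_head_step t m : \sum_(0 <= s < m.+1) binom_term t.+1 s =
  \sum_(0 <= s < m.+1) binom_term t s - p * binom_term t m.
Proof.
elim: m => [|m IHm]; first by rewrite !big_nat1 binom_term_S0; ring.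
by rewrite big_nat_recr //= IHm [in RHS]big_nat_recr //= binom_term_SS; ring.
Qed.

Lemma binom_tail_step m t :
  binom_tail m.+1 t.+1 = binom_tail m.+1 t + p * binom_term t m.
Proof.
have mass_next := binom_tail_head m.+1 t.+1.
have mass_now := binom_tail_head m.+1 t.
rewrite binom_head_step in mass_next.
by apply: (addIr (\sum_(0 <= s < m.+1) binom_term t s - p * binom_term t m));
   rewrite mass_next -mass_now; ring.
Qed.

End BinomialTail.

Section GeneralFacts.
Variables (R : realFieldType) (T : finType) (adj : rel T) (w : T -> T -> R).

Lemma is_cptw_uniform (f : nat -> R) (alpha : R) (t : nat) :
  (exists B, zero_forcing_set adj B /\ is_Z adj #|B|) ->
  (forall B s, zero_forcing_set adj B -> is_Z adj #|B| -> prob_ptw_le adj w B s = f s) ->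
  is_cptw adj w alpha t <-> (alpha <= f t /\ forall m, (m < t)%N -> f m < alpha).
Proof.
move=> [B0 [zfB0 ZB0]] prob_f; split.
  move=> [[B [zfB [ZB [reach early]]]] _]; rewrite -(prob_f B t) //.
  by split=> // m lt_mt; rewrite -(prob_f B m) //; exact: early.
move=> [reach early]; split.
  exists B0; do 3!split => //; first by rewrite prob_f.
  by move=> m lt_mt; rewrite prob_f //; exact: early.
move=> B t' zfB ZB [reach' _]; rewrite leqNgt; apply/negP => lt_t't.
by move: (lt_le_trans (early t' lt_t't) reach'); rewrite prob_f // ltxx.
Qed.

Lemma zf_fixpoint_not_forcing (B : {set T}) :
  zf_step adj B = B -> B != [set: T] -> ~~ zero_forcing_set adj B.
Proof. by move=> fixB; rewrite /zero_forcing_set /zf_closure iter_fix. Qed.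

Lemma set0_not_zero_forcing (x : T) : ~~ zero_forcing_set adj set0.
Proof.
apply: zf_fixpoint_not_forcing; last by apply/negP => /eqP/setP/(_ x); rewrite !inE.
by apply/setP => v; rewrite !inE; apply/existsP => -[u]; rewrite inE.
Qed.

Lemma after_round_set0 (S : {set T}) : after_round adj S set0 = S.
Proof. by apply/setP => v; rewrite !inE; apply/orb_idr => /existsP[u]; rewrite inE. Qed.

Lemma after_round_set1 (S : {set T}) (x : T) :
  after_round adj S [set x] = S :|: white_nbrs adj S x.
Proof.
apply/setP => v; rewrite !inE; congr (_ || _).
apply/existsP/idP => [[u /andP [/set1P -> ]]|]; first by rewrite inE.
by exists x; rewrite !inE eqxx.
Qed.

Lemma sum_subsets_set0 (F : {set T} -> R) :
  \sum_(A : {set T} | A \subset set0) F A = F set0.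
Proof. by rewrite (eq_bigl (pred1 set0)) ?big_pred1_eq // => A; rewrite subset0. Qed.

Lemma sum_subsets_set1 (F : {set T} -> R) (x : T) :
  \sum_(A : {set T} | A \subset [set x]) F A = F set0 + F [set x].
Proof.
have set0_neq : (set0 : {set T}) != [set x].
  by apply/negP => /eqP/setP/(_ x); rewrite !inE eqxx.
rewrite (bigD1 [set x]) ?subxx //= (bigD1 set0) /= ?sub0set //.
rewrite big1 ?addr0 1?addrC // => A.
by rewrite subset1 => /andP [/andP [/orP [] /eqP -> ]]; rewrite eqxx.
Qed.

End GeneralFacts.

Lemma sum_ord_indicator (R : realFieldType) (F : nat -> R) (m j : nat) :
  \sum_(k < m) (j == k :> nat)%:R * F k = if (j < m)%N then F j else 0.
Proof.
elim: m => [|m IHm]; first by rewrite big_ord0.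
rewrite big_ord_recr /= IHm ltnS.
by case: (ltngtP j m) => [_|_|->]; rewrite ?mul0r ?addr0 ?mul1r ?add0r.
Qed.

Section PathFromEndpoint.
Variables (R : realFieldType) (p : R) (n : nat).

Variables (rank : 'I_n.+1 -> nat) (vertex_at : nat -> 'I_n.+1).
Hypothesis rank_le : forall i, (rank i <= n)%N.
Hypothesis rank_vertex_at : forall k, (k <= n)%N -> rank (vertex_at k) = k.
Hypothesis vertex_at_rank : forall i, vertex_at (rank i) = i.
Hypothesis path_adj_rank :
  forall i j, path_adj i j = ((rank i).+1 == rank j) || ((rank j).+1 == rank i).

Local Notation adj := (@path_adj n.+1).
Local Notation w := (fun _ _ : 'I_n.+1 => p).

(* The blue sets that occur: the vertices of rank at most k. *)
Definition prefix (k : nat) : {set 'I_n.+1} := [set i | (rank i <= k)%N].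

Lemma prefix_inj j k : (j <= n)%N -> (k <= n)%N -> (prefix j == prefix k) = (j == k).
Proof.
move=> le_jn le_kn; apply/eqP/eqP => [eq_jk|->//].
have j_in : vertex_at j \in prefix k by rewrite -eq_jk inE rank_vertex_at.
have k_in : vertex_at k \in prefix j by rewrite eq_jk inE rank_vertex_at.
by move: j_in k_in; rewrite !inE !rank_vertex_at //; lia.
Qed.

Lemma prefix_full k : (n <= k)%N -> prefix k = [set: 'I_n.+1].
Proof. by move=> le_nk; apply/setP => i; rewrite !inE; have := rank_le i; lia. Qed.

Lemma vertex_at_eq k u : (k <= n)%N -> (u == vertex_at k) = (rank u == k).
Proof.
move=> le_kn.
by apply/eqP/eqP => [->|<-]; [rewrite rank_vertex_at | rewrite vertex_at_rank].
Qed.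

Lemma prefix0 : prefix 0 = [set vertex_at 0].
Proof. by apply/setP => i; rewrite !inE leqn0 vertex_at_eq. Qed.

Lemma white_nbrs_prefix k u : (rank u <= k)%N ->
  white_nbrs adj (prefix k) u = [set j | (rank u == k) && (rank j == k.+1)].
Proof. by move=> le_uk; apply/setP => j; rewrite !inE path_adj_rank; lia. Qed.

Lemma white_nbrs_front k : (k < n)%N ->
  white_nbrs adj (prefix k) (vertex_at k) = [set vertex_at k.+1].
Proof.
move=> lt_kn; rewrite white_nbrs_prefix rank_vertex_at ?(ltnW lt_kn) //.
by apply/setP => j; rewrite !inE eqxx vertex_at_eq.
Qed.

Lemma card_white_nbrs_prefix k u : (rank u <= k)%N ->
  #|white_nbrs adj (prefix k) u| = ((rank u == k) && (k < n))%N.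
Proof.
move=> le_uk; have [eq_uk | neq_uk] := eqVneq (rank u) k; last first.
  by apply/eqP; rewrite cards_eq0 white_nbrs_prefix // (negbTE neq_uk); apply/eqP/setP => j; rewrite !inE.
have [lt_kn | le_nk] := ltnP k n.
  have -> : u = vertex_at k by rewrite -eq_uk vertex_at_rank.
  by rewrite white_nbrs_front // cards1.
apply/eqP; rewrite cards_eq0 white_nbrs_prefix //; apply/eqP/setP => j.
by rewrite !inE; have := rank_le j; lia.
Qed.

Lemma forcers_prefix k :
  forcers adj (prefix k) = if (k < n)%N then [set vertex_at k] else set0.
Proof.
apply/setP => u; rewrite !inE; have [le_uk | gt_uk] /= := leqP (rank u) k.
  rewrite card_white_nbrs_prefix //.
  case: ifP => lt_kn; rewrite ?inE ?vertex_at_eq ?(ltnW lt_kn) ?andbT ?andbF //.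
  by case: (rank u == k).
case: ifP => lt_kn; rewrite ?inE ?vertex_at_eq ?(ltnW lt_kn) //; lia.
Qed.

Lemma after_round_front k : (k < n)%N ->
  after_round adj (prefix k) [set vertex_at k] = prefix k.+1.
Proof.
move=> lt_kn; rewrite after_round_set1 white_nbrs_front //.
by apply/setP => v; rewrite !inE vertex_at_eq //; lia.
Qed.

Lemma zf_step_prefix k : zf_step adj (prefix k) = prefix k.+1.
Proof.
have [lt_kn | le_nk] := ltnP k n; last first.
  by rewrite !prefix_full ?(leqW le_nk) //; apply/setP => v; rewrite !inE.
apply/setP => v; rewrite !inE.
apply/idP/idP => [/orP [le_vk | /existsP [u /andP [u_in /eqP white_u]]] | le_vSk].
- exact: leqW.
- have : v \in white_nbrs adj (prefix k) u by rewrite white_u set11.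
  have u_le : (rank u <= k)%N by move: u_in; rewrite inE.
  by rewrite white_nbrs_prefix // inE => /andP [_ /eqP ->].
- have [//|gt_vk] := leqP (rank v) k.
  have /eqP -> : v == vertex_at k.+1 by rewrite vertex_at_eq //; lia.
  apply/orP; right; apply/existsP; exists (vertex_at k).
  by rewrite white_nbrs_front // eqxx andbT inE rank_vertex_at // ltnW.
Qed.

Lemma zero_forcing_endpoint : zero_forcing_set adj [set vertex_at 0].
Proof.
rewrite /zero_forcing_set /zf_closure -prefix0 card_ord.
have iter_prefix m : iter m (zf_step adj) (prefix 0) = prefix m.
  by elim: m => //= m ->; rewrite zf_step_prefix.
by rewrite iter_prefix prefix_full.
Qed.

Definition stay_prob (k : nat) : R := if (k < n)%N then 1 - p else 1.
Definition advance_prob (k : nat) : R := if (k < n)%N then p else 0.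

Lemma step_prob_prefix k S' :
  step_prob adj w (prefix k) S' =
  (S' == prefix k)%:R * stay_prob k + (S' == prefix k.+1)%:R * advance_prob k.
Proof.
rewrite /step_prob forcers_prefix /stay_prob /advance_prob; case: ifP => lt_kn.
  rewrite sum_subsets_set1 setD0 setDv after_round_set0 after_round_front //.
  by rewrite !big_set0 !big_set1 white_nbrs_front // !big_set1; ring.
by rewrite sum_subsets_set0 setD0 after_round_set0 !big_set0; ring.
Qed.

Definition off_prefix (S : {set 'I_n.+1}) : Prop := forall j, (j <= n)%N -> S != prefix j.

Lemma step_prob_off_prefix k S' : (k <= n)%N -> off_prefix S' ->
  step_prob adj w (prefix k) S' = 0.
Proof.
move=> le_kn offS'; rewrite step_prob_prefix (negbTE (offS' k le_kn)) /advance_prob.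
by case: ifP => lt_kn; rewrite ?(negbTE (offS' k.+1 lt_kn)) !mul0r ?mulr0 add0r.
Qed.

Local Notation blue_from_end := (blue_dist adj w (prefix 0)).

Lemma blue_dist_step_prefixes t S' :
  (forall S, off_prefix S -> blue_from_end t S = 0) ->
  blue_from_end t.+1 S' =
  \sum_(k < n.+1) blue_from_end t (prefix k) * step_prob adj w (prefix k) S'.
Proof.
move=> off_null /=.
rewrite (bigID (mem [set prefix k | k : 'I_n.+1])) /= [X in _ + X]big1 ?addr0; last first.
  move=> S S_off; rewrite off_null ?mul0r // => j le_jn; apply: contra S_off => /eqP->.
  by apply/imsetP; exists (inord j); rewrite ?inordK.
rewrite big_imset // => i k _ _ /eqP.
by rewrite prefix_inj ?leq_ord // => /eqP; exact: val_inj.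
Qed.

Lemma blue_dist_off_prefix t S : off_prefix S -> blue_from_end t S = 0.
Proof.
elim: t S => [|t IHt] S offS; first by rewrite /= (negbTE (offS 0%N _)).
rewrite blue_dist_step_prefixes // big1 // => k _.
by rewrite step_prob_off_prefix ?leq_ord ?mulr0.
Qed.

Hypothesis n_gt0 : (0 < n)%N.

(* The rank of the front after t rounds is Bin(t,p), cut off at n. *)
Definition front_dist (t k : nat) : R :=
  if (k < n)%N then binom_term p t k else binom_tail p n t.

Lemma blue_dist_start j : (j <= n)%N -> blue_from_end 0 (prefix j) = front_dist 0 j.
Proof.
rewrite /= /front_dist => le_jn; rewrite prefix_inj //.
case: j le_jn => [|j] le_jn; first by rewrite n_gt0 /binom_term bin0 expr0 !mulr1.
by case: ifP => _; rewrite ?/binom_term ?bin0n ?mul0r // /binom_tail big_geq.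
Qed.

(* The front evolves as a binomial counter absorbed at n: staying at k
   is weighted by 1 - p, coming from k - 1 by p (Pascal's rule), and the
   absorbing state n collects the tail (binom_tail_step). *)
Lemma blue_dist_prefix t j : (j <= n)%N -> blue_from_end t (prefix j) = front_dist t j.
Proof.
elim: t j => [|t IHt] j le_jn; first exact: blue_dist_start.
rewrite blue_dist_step_prefixes; last exact: blue_dist_off_prefix.
rewrite (eq_bigr (fun k : 'I_n.+1 => (j == k)%:R * (front_dist t k * stay_prob k) +
                    (j == k.+1)%:R * (front_dist t k * advance_prob k))); last first.
  move=> k _; rewrite IHt ?leq_ord // step_prob_prefix prefix_inj ?leq_ord //.
  have [lt_kn | le_nk] := ltnP k n; first by rewrite prefix_inj //; ring.
  by rewrite /advance_prob (leq_gtF le_nk); ring.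
rewrite big_split /= (sum_ord_indicator (fun k => front_dist t k * stay_prob k)) ltnS le_jn.
case: j le_jn => [|j] le_jn.
  rewrite big1 ?addr0 => [|k _]; last by rewrite mul0r.
  by rewrite /front_dist /stay_prob n_gt0 binom_term_S0 mulrC.
rewrite (eq_bigr (fun k : 'I_n.+1 => (j == k)%:R * (front_dist t k * advance_prob k)));
  last by move=> k _; rewrite eqSS.
rewrite (sum_ord_indicator (fun k => front_dist t k * advance_prob k)) ltnW //.
rewrite /front_dist /stay_prob /advance_prob le_jn.
have [lt_jn | le_nj] := ltnP j.+1 n; first by rewrite binom_term_SS; ring.
have -> : n = j.+1 by lia.
by rewrite binom_tail_step; ring.
Qed.

Lemma prob_ptw_le_endpoint t : prob_ptw_le adj w [set vertex_at 0] t = binom_tail p n t.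
Proof.
by rewrite /prob_ptw_le -prefix0 -(prefix_full (leqnn n)) blue_dist_prefix // /front_dist ltnn.
Qed.

End PathFromEndpoint.

Section PathMinimumZeroForcing.
Variable n : nat.
Local Notation adj := (@path_adj n.+1).

(* An interior vertex has two white neighbours, so it cannot force alone. *)
Lemma interior_not_zero_forcing (v : 'I_n.+1) :
  (0 < v < n)%N -> ~~ zero_forcing_set adj [set v].
Proof.
move=> /andP [v_gt0 v_ltn]; apply: zf_fixpoint_not_forcing; last first.
  by apply/negP => /eqP all_v; have := cards1 v; rewrite all_v cardsT card_ord; lia.
apply/setP => x; rewrite !inE; apply/orb_idr => /existsP [u /andP [/set1P -> /eqP white_v]].
have white_nbr (d : nat) : (d < n.+1)%N -> (d.+1 == v) || (v.+1 == d) ->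
    (inord d : 'I_n.+1) \in white_nbrs adj [set v] v.
  move=> d_lt d_nbr; rewrite !inE /path_adj inordK // orbC d_nbr /=.
  by apply/eqP => /(congr1 val); rewrite /= inordK //; lia.
have := white_nbr v.-1 ltac:(lia) ltac:(lia); have := white_nbr v.+1 ltac:(lia) ltac:(lia).
rewrite white_v !inE => /eqP next_x /eqP prev_x.
by have := congr1 val (etrans next_x (esym prev_x)); rewrite /= !inordK //; lia.
Qed.

Definition endpoint_ranking (rank : 'I_n.+1 -> nat) (vertex_at : nat -> 'I_n.+1) : Prop :=
  [/\ forall i, (rank i <= n)%N,
      forall k, (k <= n)%N -> rank (vertex_at k) = k,
      forall i, vertex_at (rank i) = i &
      forall i j, adj i j = ((rank i).+1 == rank j) || ((rank j).+1 == rank i)].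

Lemma ranking_from_first : endpoint_ranking (@nat_of_ord n.+1) inord.
Proof.
split=> [i|k le_kn|i|i j] //; [exact: leq_ord | by rewrite inordK | exact: inord_val].
Qed.

Lemma ranking_from_last :
  endpoint_ranking (fun i => n - i)%N (fun k => inord (n - k)%N).
Proof.
split=> [i|k le_kn|i|i j] /=; first exact: leq_subr.
- by rewrite inordK; lia.
- by apply: val_inj; rewrite /= inordK; have := leq_ord i; lia.
- by rewrite /path_adj; have := leq_ord i; have := leq_ord j; lia.
Qed.

Lemma zero_forcing_first : zero_forcing_set adj [set inord 0].
Proof. by case: ranking_from_first; exact: zero_forcing_endpoint. Qed.

Lemma path_is_Z1 : is_Z adj 1.
Proof.
split; first by exists [set inord 0]; rewrite zero_forcing_first cards1.
move=> B zfB; rewrite card_gt0; apply: contraTneq zfB => ->.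
exact: (set0_not_zero_forcing _ ord0).
Qed.

Lemma minimum_zero_forcing_endpoint B : zero_forcing_set adj B -> is_Z adj #|B| ->
  B = [set inord 0] \/ B = [set inord n].
Proof.
move=> zfB [_ minB].
have /cards1P [v B_v] : #|B| == 1%N.
  rewrite eqn_leq -{1}(cards1 (inord 0 : 'I_n.+1)) minB ?zero_forcing_first //=.
  rewrite card_gt0; apply: contraTneq zfB => ->; exact: (set0_not_zero_forcing _ ord0).
rewrite {}B_v in zfB *.
have [v0 | v_gt0] := posnP v.
  by left; congr [set _]; apply: val_inj; rewrite /= inordK.
have [v_ltn | v_gen] := ltnP v n.
  by have := @interior_not_zero_forcing v; rewrite v_gt0 v_ltn zfB => /(_ isT).
by right; congr [set _]; apply: val_inj; rewrite /= inordK //; have := leq_ord v; lia.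
Qed.

Lemma prob_ptw_le_minimum (R : realFieldType) (p : R) B t :
  (0 < n)%N -> zero_forcing_set adj B -> is_Z adj #|B| ->
  prob_ptw_le adj (fun _ _ => p) B t = binom_tail p n t.
Proof.
move=> n_gt0 zfB ZB; case: (minimum_zero_forcing_endpoint zfB ZB) => ->.
  case: ranking_from_first => rank_le rank_vertex_at vertex_at_rank adj_rank.
  exact: (prob_ptw_le_endpoint p rank_le rank_vertex_at vertex_at_rank adj_rank).
have -> : [set inord n] = [set (inord (n - 0)%N : 'I_n.+1)] by rewrite subn0.
case: ranking_from_last => rank_le rank_vertex_at vertex_at_rank adj_rank.
exact: (prob_ptw_le_endpoint p rank_le rank_vertex_at vertex_at_rank adj_rank).
Qed.

End PathMinimumZeroForcing.

(* cptw(P_n, alpha) is the first t with Pr(Bin(t,p) >= n - 1) >= alpha: every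
   minimum zero forcing set is an endpoint, whose propagation time is the
   waiting time for n - 1 successes. *)
Theorem mainTheorem9 (R : realFieldType) (n : nat) (p alpha : R) :
  (2 <= n)%N -> 0 < p < 1 -> 0 < alpha < 1 ->
  forall t : nat,
    is_cptw (@path_adj n) (fun _ _ => p) alpha t <->
    (alpha <= \sum_(n.-1 <= s < t.+1) ('C(t, s)%:R * p ^+ s * (1 - p) ^+ (t - s)) /\
     forall m : nat, (m < t)%N ->
       \sum_(n.-1 <= s < m.+1) ('C(m, s)%:R * p ^+ s * (1 - p) ^+ (m - s)) < alpha).
Proof.
case: n => [|n] // n_ge2 _ _ t.
apply: (is_cptw_uniform (f := binom_tail p n)).
  by exists [set inord 0]; rewrite cards1 zero_forcing_first; split=> //; exact: path_is_Z1.
by move=> B s zfB ZB; exact: prob_ptw_le_minimum.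
Qed.
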